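(* $e(\lambda)\to 0$ from below as $\lambda\to\infty$, i.e. $e(\lambda)\to 0^-$.
   Context: Standing setup. Let $\gamma>0$; let $a_1,\dots,a_p>0$ with weights $\omega_i>0$, $\sum_i\omega_i=1$, and $b_1,\dots,b_n>0$ with weights $\pi_j>0$, $\sum_j\pi_j=1$. Let $\mu$ be the limiting spectral distribution of $\mathbf{N}\mathbf{N}^T$ where $\mathbf{N}=\mathbf{A}^{1/2}\mathbf{G}\mathbf{B}^{1/2}$ is $k\times l$, $\mathbf{G}$ has iid mean-zero entries of variance $1/l$, $k/l\to\gamma$, and the spectral distributions of $\mathbf{A},\mathbf{B}$ converge to $\nu=\sum_i\omega_i\delta_{a_i}$ and $\underline{\nu}=\sum_j\pi_j\delta_{b_j}$. $\mu$ is a compactly supported probability measure on $[0,\infty)$; $\lambda^*>0$ is the right endpoint of its support, and $s(\lambda)=\int\frac{d\mu(t)}{t-\lambda}$ for $\lambda>\lambda^*$. Define $G(e)=\sum_{j=1}^n\frac{b_j\pi_j}{1+\gamma b_j e}$. It is known (master equations) that there is a continuous (indeed smooth) real function $e(\lambda)$ on $(\lambda^*,\infty)$, never equal to a pole $-1/(\gamma b_j)$ of $G$ and with $a_iG(e(\lambda))\ne\lambda$, satisfying $s(\lambda)=\sum_{i=1}^p\frac{\omega_i}{a_iG(e(\lambda))-\lambda}$ and $e(\lambda)=\sum_{i=1}^p\frac{a_i\omega_i}{a_iG(e(\lambda))-\lambda}$. *)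

From Stdlib Require Import Reals Lra.
Open Scope R_scope.

Fixpoint rsum (n : nat) (f : nat -> R) : R :=
  match n with
  | O => 0
  | S k => rsum k f + f k
  end.

(* A compactly supported probability measure mu on [0, oo) is represented by
   its distribution function F (F t = mu((-oo, t])).  [is_cdf_endpoint F ls]
   says F is such a distribution function and ls is the right endpoint of the
   support of mu. *)
Definition is_cdf_endpoint (F : R -> R) (ls : R) : Prop :=
  (forall t u, t <= u -> F t <= F u) /\
  (forall t eps, 0 < eps -> exists delta, 0 < delta /\
       forall u, t <= u < t + delta -> F u - F t < eps) /\
  (forall t, t < 0 -> F t = 0) /\
  (forall t, ls <= t -> F t = 1) /\
  (forall t, t < ls -> F t < 1).

Definition RS_sum (F g : R -> R) (lo hi : R) (n : nat) : R :=
  let h := (hi - lo) / INR n in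
  rsum n (fun k => g (lo + INR k * h) *
                   (F (lo + INR (S k) * h) - F (lo + INR k * h))).

(* [stieltjes F ls lam v]: v = \int dmu(t) / (t - lam) (for lam > ls); the
   integrand is continuous on [-1, ls] which contains supp mu, so the
   Riemann-Stieltjes sums over [-1, ls] converge to the integral. *)
Definition stieltjes (F : R -> R) (ls lam v : R) : Prop :=
  Un_cv (fun n => RS_sum F (fun t => / (t - lam)) (-1) ls (S n)) v.

Definition Gfun (gamma : R) (n : nat) (b pi : nat -> R) (e : R) : R :=
  rsum n (fun j => b j * pi j / (1 + gamma * b j * e)).

From Stdlib Require Import Reals.
From Stdlib Require Import Lra Lia.
Open Scope R_scope.

(* Write g = G(e(lam)), A = sum_i a_i and
   W = sum_i a_i omega_i.  Multiplying the master equation for e by g and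
   using sum_i omega_i = 1 gives the identity  e(lam) g = 1 + lam s(lam).
   Since mu is a probability measure supported in [0, lstar], s(lam) lies in
   [-1/(lam - lstar), -1/(lam + 1)], so lam |1 + lam s(lam)| stays bounded.
   Consequently, if |g| > lam / (2A) then |e(lam)| = O(1/lam^2); but for tiny
   e every denominator 1 + gamma b_j e is >= 1/2, so g <= 2 sum_j b_j pi_j is
   bounded, contradicting |g| > lam / (2A) for large lam.  Hence
   |g| <= lam / (2A), every denominator a_i g - lam is <= -lam/2, and the
   master equation gives  -2W/lam <= e(lam) < 0.
   The file first collects facts on the finite sums [rsum], then bounds the
   Stieltjes transform, then proves the algebraic and size estimates above,
   and finally assembles them into the corollary. *)

Lemma rsum_ext n f g :
  (forall i, (i < n)%nat -> f i = g i) -> rsum n f = rsum n g.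
Proof.
  induction n as [|n IH]; simpl; intros Hfg; [reflexivity|].
  rewrite IH by (intros; apply Hfg; lia). rewrite Hfg by lia. reflexivity.
Qed.

Lemma rsum_plus n f g : rsum n (fun i => f i + g i) = rsum n f + rsum n g.
Proof. induction n as [|n IH]; simpl; [lra|]. rewrite IH. lra. Qed.

Lemma rsum_scal n c f : rsum n (fun i => c * f i) = c * rsum n f.
Proof. induction n as [|n IH]; simpl; [lra|]. rewrite IH. lra. Qed.

Lemma rsum_zero n : rsum n (fun _ => 0) = 0.
Proof. induction n as [|n IH]; simpl; [lra|]. rewrite IH. lra. Qed.

Lemma rsum_le n f g :
  (forall i, (i < n)%nat -> f i <= g i) -> rsum n f <= rsum n g.
Proof.
  induction n as [|n IH]; simpl; intros Hfg; [lra|].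
  assert (rsum n f <= rsum n g) by (apply IH; intros; apply Hfg; lia).
  assert (f n <= g n) by (apply Hfg; lia). lra.
Qed.

Lemma rsum_lt n f g : (0 < n)%nat ->
  (forall i, (i < n)%nat -> f i < g i) -> rsum n f < rsum n g.
Proof.
  intros Hn Hfg. destruct n as [|n]; [lia|]. simpl.
  assert (rsum n f <= rsum n g) by (apply rsum_le; intros; left; apply Hfg; lia).
  assert (f n < g n) by (apply Hfg; lia). lra.
Qed.

Lemma rsum_pos n f : (0 < n)%nat ->
  (forall i, (i < n)%nat -> 0 < f i) -> 0 < rsum n f.
Proof. intros. rewrite <- (rsum_zero n). now apply rsum_lt. Qed.

Lemma rsum_neg n f : (0 < n)%nat ->
  (forall i, (i < n)%nat -> f i < 0) -> rsum n f < 0.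
Proof. intros. rewrite <- (rsum_zero n). now apply rsum_lt. Qed.

Lemma rsum_term n f k :
  (forall i, (i < n)%nat -> 0 <= f i) -> (k < n)%nat -> f k <= rsum n f.
Proof.
  induction n as [|n IH]; intros Hf Hk; [lia|]. simpl.
  assert (0 <= f n) by (apply Hf; lia).
  destruct (Nat.eq_dec k n) as [->|Hkn].
  - assert (0 <= rsum n f).
    { rewrite <- (rsum_zero n). apply rsum_le. intros; apply Hf; lia. }
    lra.
  - assert (f k <= rsum n f) by (apply IH; [intros; apply Hf; lia | lia]). lra.
Qed.

Lemma rsum_telescope n u : rsum n (fun k => u (S k) - u k) = u n - u O.
Proof. induction n as [|n IH]; simpl; [lra|]. rewrite IH. lra. Qed.

(* A Riemann-Stieltjes sum against a distribution function carrying all its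
   mass on [lo, hi] is an average of values of g, hence lies between the
   bounds of g on [lo, hi]. *)
Lemma RS_sum_bounds F g lo hi c C m :
  (forall t u, t <= u -> F t <= F u) -> F lo = 0 -> F hi = 1 -> lo < hi ->
  (forall x, lo <= x <= hi -> c <= g x <= C) ->
  c <= RS_sum F g lo hi (S m) <= C.
Proof.
  intros Hmono Hlo Hhi Hlohi Hg. unfold RS_sum. cbv zeta.
  set (h := (hi - lo) / INR (S m)).
  assert (HSm : 0 < INR (S m)) by (apply lt_0_INR; lia).
  assert (Hfull : INR (S m) * h = hi - lo) by (unfold h; field; lra).
  set (x := fun k => lo + INR k * h).
  assert (Hincr : forall k, 0 <= F (x (S k)) - F (x k)).
  { intro k. assert (0 < h) by (unfold h; apply Rdiv_lt_0_compat; lra).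
    assert (x k <= x (S k)) by (unfold x; rewrite S_INR; lra).
    specialize (Hmono _ _ H0). lra. }
  assert (Hmass : rsum (S m) (fun k => F (x (S k)) - F (x k)) = 1).
  { rewrite (rsum_telescope (S m) (fun k => F (x k))). unfold x.
    rewrite Hfull. simpl INR. replace (lo + 0 * h) with lo by ring.
    replace (lo + (hi - lo)) with hi by ring. lra. }
  assert (Htags : forall k, (k < S m)%nat -> lo <= x k <= hi).
  { intros k Hk. unfold x. assert (0 <= INR k) by apply pos_INR.
    assert (INR k <= INR (S m)) by (apply le_INR; lia).
    assert (0 < h) by (unfold h; apply Rdiv_lt_0_compat; lra). nra. }
  change (fun k => g (lo + INR k * h) * (F (lo + INR (S k) * h) - F (lo + INR k * h)))
    with (fun k => g (x k) * (F (x (S k)) - F (x k))).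
  split.
  - apply Rle_trans with (rsum (S m) (fun k => c * (F (x (S k)) - F (x k)))).
    + rewrite rsum_scal, Hmass. lra.
    + apply rsum_le. intros k Hk. apply Rmult_le_compat_r; [apply Hincr|].
      apply Hg, Htags, Hk.
  - apply Rle_trans with (rsum (S m) (fun k => C * (F (x (S k)) - F (x k)))).
    + apply rsum_le. intros k Hk. apply Rmult_le_compat_r; [apply Hincr|].
      apply Hg, Htags, Hk.
    + rewrite rsum_scal, Hmass. lra.
Qed.

Lemma Un_cv_const c : Un_cv (fun _ => c) c.
Proof.
  intros eps Heps. exists O. intros k _.
  unfold R_dist. rewrite Rminus_diag, Rabs_R0. exact Heps.
Qed.

Lemma Un_cv_bounds u l c C :
  Un_cv u l -> (forall k, c <= u k <= C) -> c <= l <= C.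
Proof.
  intros Hu Hb. split.
  - apply (Rle_cv_lim (Un := fun _ => c) (Vn := u)); [intro k; apply Hb | apply Un_cv_const | exact Hu].
  - apply (Rle_cv_lim (Un := u) (Vn := fun _ => C)); [intro k; apply Hb | exact Hu | apply Un_cv_const].
Qed.

Lemma stieltjes_bounds F ls lam v : is_cdf_endpoint F ls -> 0 < ls -> ls < lam ->
  stieltjes F ls lam v -> - / (lam - ls) <= v <= - / (lam + 1).
Proof.
  intros [Hmono [_ [Hneg [Hone _]]]] Hls Hlam Hv.
  apply (Un_cv_bounds _ _ _ _ Hv). intro m. apply RS_sum_bounds; auto.
  - apply Hneg; lra.
  - apply Hone; lra.
  - lra.
  - intros x Hx. replace (/ (x - lam)) with (- / (lam - x)) by (field; lra).
    split; apply Ropp_le_contravar; apply Rinv_le_contravar; lra.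
Qed.

Lemma stieltjes_defect_bound F ls lam v : is_cdf_endpoint F ls -> 0 < ls ->
  2 * ls <= lam -> stieltjes F ls lam v -> lam * Rabs (1 + lam * v) <= 2 * ls + 1.
Proof.
  intros Hcdf Hls Hlam Hv.
  destruct (stieltjes_bounds F ls lam v Hcdf Hls ltac:(lra) Hv) as [Hlow Hup].
  assert (Hlow' : - lam <= lam * ((lam - ls) * v)).
  { replace (- lam) with (lam * ((lam - ls) * - / (lam - ls))) by (field; lra).
    apply Rmult_le_compat_l; [lra|]. apply Rmult_le_compat_l; lra. }
  assert (Hup' : (lam + 1) * v <= -1).
  { replace (-1) with ((lam + 1) * - / (lam + 1)) by (field; lra).
    apply Rmult_le_compat_l; lra. }
  unfold Rabs. destruct (Rcase_abs (1 + lam * v)); nra.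
Qed.

(* Multiplying the master equation for e by g:
   (sum_i a_i w_i / (a_i g - lam)) g = sum_i w_i + lam sum_i w_i / (a_i g - lam). *)
Lemma master_identity p a omega g lam :
  (forall i, (i < p)%nat -> a i * g - lam <> 0) ->
  rsum p (fun i => a i * omega i / (a i * g - lam)) * g
  = rsum p omega + lam * rsum p (fun i => omega i / (a i * g - lam)).
Proof.
  intros Hden. rewrite Rmult_comm, <- !rsum_scal, <- rsum_plus.
  apply rsum_ext. intros i Hi. field. now apply Hden.
Qed.

(* When |g| <= lam / (2 sum_i a_i), every denominator a_i g - lam is at most
   -lam/2, so the weighted sum defining e is negative and of size at most
   2 W / lam. *)
Lemma resolvent_sum_bounds p a omega g lam : (0 < p)%nat -> 0 < lam ->
  (forall i, (i < p)%nat -> 0 < a i /\ 0 < omega i) ->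
  Rabs g <= lam / (2 * rsum p a) ->
  - (2 / lam) * rsum p (fun i => a i * omega i)
    <= rsum p (fun i => a i * omega i / (a i * g - lam)) < 0.
Proof.
  intros Hp Hlam Hpos Hgabs.
  assert (HA : 0 < rsum p a) by (apply rsum_pos; auto; intros; apply Hpos; auto).
  assert (Hg : forall i, (i < p)%nat -> a i * g <= lam / 2).
  { intros i Hi. destruct (Hpos i Hi) as [Ha _].
    assert (a i <= rsum p a)
      by (apply rsum_term; auto; intros k Hk; left; apply Hpos, Hk).
    assert (a i * g <= rsum p a * Rabs g) by (generalize (Rle_abs g) (Rabs_pos g); nra).
    assert (rsum p a * Rabs g <= rsum p a * (lam / (2 * rsum p a)))
      by (apply Rmult_le_compat_l; lra).
    replace (rsum p a * (lam / (2 * rsum p a))) with (lam / 2) in * by (field; lra).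
    lra. }
  split.
  - rewrite <- rsum_scal. apply rsum_le. intros i Hi.
    destruct (Hpos i Hi) as [Ha Ho]. specialize (Hg i Hi).
    assert (Hw : 0 < a i * omega i) by nra.
    assert (Hinv : / (lam - a i * g) <= 2 / lam).
    { replace (2 / lam) with (/ (lam / 2)) by (field; lra).
      apply Rinv_le_contravar; lra. }
    replace (a i * omega i / (a i * g - lam))
      with (- (a i * omega i * / (lam - a i * g))) by (field; lra).
    assert (a i * omega i * / (lam - a i * g) <= a i * omega i * (2 / lam))
      by (apply Rmult_le_compat_l; lra).
    lra.
  - apply rsum_neg; [exact Hp|]. intros i Hi.
    destruct (Hpos i Hi) as [Ha Ho]. specialize (Hg i Hi).
    assert (/ (a i * g - lam) < 0) by (apply Rinv_lt_0_compat; lra).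
    unfold Rdiv. assert (0 < a i * omega i) by nra. nra.
Qed.

(* For a small argument x (gamma (sum_j b_j) |x| <= 1/2) every denominator of
   G is at least 1/2, so 0 <= G(x) <= 2 sum_j b_j pi_j. *)
Lemma Gfun_small_arg gamma n b pi x : 0 < gamma ->
  (forall j, (j < n)%nat -> 0 < b j /\ 0 < pi j) ->
  gamma * rsum n b * Rabs x <= 1 / 2 ->
  0 <= Gfun gamma n b pi x <= 2 * rsum n (fun j => b j * pi j).
Proof.
  intros Hg Hpos Hx.
  assert (Hden : forall j, (j < n)%nat -> 1 / 2 <= 1 + gamma * b j * x).
  { intros j Hj. destruct (Hpos j Hj) as [Hb _].
    assert (b j <= rsum n b)
      by (apply rsum_term; [intros k Hk; left; apply Hpos | ]; auto).
    assert (gamma * b j * Rabs x <= gamma * rsum n b * Rabs x).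
    { apply Rmult_le_compat_r; [apply Rabs_pos|]. apply Rmult_le_compat_l; lra. }
    assert (- (gamma * b j * x) <= gamma * b j * Rabs x).
    { rewrite Ropp_mult_distr_r. apply Rmult_le_compat_l; [nra|].
      rewrite <- Rabs_Ropp. apply Rle_abs. }
    lra. }
  unfold Gfun. split.
  - rewrite <- (rsum_zero n). apply rsum_le. intros j Hj.
    destruct (Hpos j Hj). specialize (Hden j Hj). unfold Rdiv.
    apply Rmult_le_pos; [nra | left; apply Rinv_0_lt_compat; lra].
  - rewrite <- rsum_scal. apply rsum_le. intros j Hj.
    destruct (Hpos j Hj). specialize (Hden j Hj).
    assert (/ (1 + gamma * b j * x) <= 2).
    { replace 2 with (/ (1 / 2)) by field. apply Rinv_le_contravar; lra. }
    assert (0 < b j * pi j) by nra. unfold Rdiv. nra.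
Qed.

(* Key estimate: if x g = q with g = G(x) and lam |q| <= K, then for lam large
   (in terms of A, K, gamma, b, pi) the value g cannot exceed lam / (2A):
   otherwise |x| would be O(1/lam^2), forcing g = O(1). *)
Lemma Gfun_fixed_point_small gamma n b pi A K lam x :
  0 < gamma -> (forall j, (j < n)%nat -> 0 < b j /\ 0 < pi j) ->
  0 < A -> 1 <= lam ->
  lam * Rabs (x * Gfun gamma n b pi x) <= K ->
  4 * A * K * gamma * rsum n b < lam ->
  4 * A * rsum n (fun j => b j * pi j) < lam ->
  Rabs (Gfun gamma n b pi x) <= lam / (2 * A).
Proof.
  intros Hg Hpos HA Hlam HK Hlam1 Hlam2.
  set (g := Gfun gamma n b pi x) in *. set (B := rsum n b) in *.
  apply Rnot_lt_le. intro Hbig.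
  assert (HB : 0 <= B)
    by (unfold B; rewrite <- (rsum_zero n); apply rsum_le; intros j Hj;
        left; apply Hpos, Hj).
  assert (Hx : Rabs x * lam * lam <= 2 * A * K).
  { rewrite Rabs_mult in HK.
    assert (Rabs x * (lam / (2 * A)) <= Rabs x * Rabs g)
      by (apply Rmult_le_compat_l; [apply Rabs_pos | lra]).
    replace (Rabs x * lam * lam) with (2 * A * (lam * (Rabs x * (lam / (2 * A)))))
      by (field; lra).
    apply Rmult_le_compat_l; [lra|]. apply Rle_trans with (lam * (Rabs x * Rabs g)).
    - apply Rmult_le_compat_l; lra.
    - lra. }
  assert (Hsmall : gamma * B * Rabs x <= 1 / 2).
  { assert (Hax : 0 <= Rabs x) by apply Rabs_pos.
    assert (gamma * B * (Rabs x * lam * lam) <= gamma * B * (2 * A * K))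
      by (apply Rmult_le_compat_l; nra).
    nra. }
  destruct (Gfun_small_arg gamma n b pi x Hg Hpos Hsmall) as [Hg0 Hg1].
  fold g in Hg0, Hg1. rewrite Rabs_right in Hbig by lra.
  assert (lam < 4 * A * rsum n (fun j => b j * pi j)).
  { apply (Rmult_lt_reg_r (/ (2 * A))); [apply Rinv_0_lt_compat; lra|].
    replace (4 * A * rsum n (fun j => b j * pi j) * / (2 * A))
      with (2 * rsum n (fun j => b j * pi j)) by (field; lra).
    unfold Rdiv in Hbig. lra. }
  lra.
Qed.

Theorem corollary3p3
  (gamma : R) (p n : nat) (a omega b pi : nat -> R)
  (F : R -> R) (lstar : R) (s e : R -> R) :
  0 < gamma ->
  (forall i, (i < p)%nat -> 0 < a i /\ 0 < omega i) ->
  rsum p omega = 1 ->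
  (forall j, (j < n)%nat -> 0 < b j /\ 0 < pi j) ->
  rsum n pi = 1 ->
  is_cdf_endpoint F lstar ->
  0 < lstar ->
  (forall lam, lstar < lam -> stieltjes F lstar lam (s lam)) ->
  (forall lam, lstar < lam -> continuity_pt e lam) ->
  (forall lam j, lstar < lam -> (j < n)%nat -> 1 + gamma * b j * e lam <> 0) ->
  (forall lam i, lstar < lam -> (i < p)%nat ->
       a i * Gfun gamma n b pi (e lam) <> lam) ->
  (forall lam, lstar < lam ->
       s lam = rsum p (fun i => omega i / (a i * Gfun gamma n b pi (e lam) - lam))) ->
  (forall lam, lstar < lam ->
       e lam = rsum p (fun i => a i * omega i / (a i * Gfun gamma n b pi (e lam) - lam))) ->
  forall eps, 0 < eps ->
    exists M, lstar < M /\ forall lam, M < lam -> - eps < e lam < 0.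
Proof.
  intros Hgamma Hpos_a Homega Hpos_b Hpi Hcdf Hls Hst _ _ Hne Hs He eps Heps.
  assert (Hp : (0 < p)%nat) by (destruct p; [simpl in Homega; lra | lia]).
  assert (Hn : (0 < n)%nat) by (destruct n; [simpl in Hpi; lra | lia]).
  set (A := rsum p a). set (W := rsum p (fun i => a i * omega i)).
  set (K := 2 * lstar + 1).
  assert (HA : 0 < A) by (apply rsum_pos; auto; intros; apply Hpos_a; auto).
  assert (HW : 0 < W)
    by (apply rsum_pos; auto; intros i Hi; destruct (Hpos_a i Hi); nra).
  assert (HB : 0 < rsum n b) by (apply rsum_pos; auto; intros; apply Hpos_b; auto).
  assert (HB2 : 0 < rsum n (fun j => b j * pi j))
    by (apply rsum_pos; auto; intros j Hj; destruct (Hpos_b j Hj); nra).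
  assert (HM1 : 0 < 4 * A * K * gamma * rsum n b)
    by (unfold K; repeat apply Rmult_lt_0_compat; lra).
  assert (HM2 : 0 < 4 * A * rsum n (fun j => b j * pi j))
    by (repeat apply Rmult_lt_0_compat; lra).
  assert (HM3 : 0 < 2 * W / eps) by (apply Rdiv_lt_0_compat; lra).
  (* M exceeds 2 lstar + 1, both thresholds of [Gfun_fixed_point_small], and 2W/eps. *)
  exists (1 + 2 * lstar + 4 * A * K * gamma * rsum n b
          + 4 * A * rsum n (fun j => b j * pi j) + 2 * W / eps).
  split; [lra|]. intros lam Hlam.
  assert (Hl : lstar < lam) by lra.
  set (g := Gfun gamma n b pi (e lam)).
  assert (Hid : e lam * g = 1 + lam * s lam).
  { rewrite (He lam Hl), (Hs lam Hl), master_identity, Homega; [reflexivity|].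
    intros i Hi. specialize (Hne lam i Hl Hi). fold g in Hne. lra. }
  assert (Hdefect : lam * Rabs (e lam * g) <= K)
    by (rewrite Hid; apply (stieltjes_defect_bound F lstar); auto; lra).
  assert (Hg : Rabs g <= lam / (2 * A))
    by (apply (Gfun_fixed_point_small _ _ _ _ _ K); auto; lra).
  destruct (resolvent_sum_bounds p a omega g lam Hp ltac:(lra) Hpos_a Hg)
    as [Hlow Hneg].
  rewrite (He lam Hl). fold g W in Hlow |- *. split; [|exact Hneg].
  assert (2 * W / lam < eps).
  { apply (Rmult_lt_reg_r lam); [lra|].
    replace (2 * W / lam * lam) with (2 * W / eps * eps) by (field; lra).
    rewrite (Rmult_comm eps lam). apply Rmult_lt_compat_r; lra. }
  replace (- (2 / lam) * W) with (- (2 * W / lam)) in Hlow by (field; lra). lra.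
Qed.
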